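(* For $0<q<1$ and $w\in\mathbb{C}$, \[ \sum_{k=-\infty}^{\infty}q^{-k/2}\,\mathfrak{j}_k(2w;q)^2=\mathfrak{j}_0(2w;q)^2+\sum_{k=1}^\infty\big(q^{k/2}+q^{-k/2}\big)\mathfrak{j}_k(2w;q)^2=(-q^{1/2}w^2;q)_\infty. \] Equivalently, \[ J_0^{(2)}(2w;q)^2+\sum_{k=1}^\infty\big(q^{k/2}+q^{-k/2}\big)q^{k^2/2}J_k^{(2)}(2w;q)^2=(-w^2;q)_\infty. \]
   Context: $(a;q)_k=\prod_{j=0}^{k-1}(1-aq^j)$, $(a;q)_\infty=\lim_k(a;q)_k$, ${}_0\phi_1(;b;q,z)=\sum_{k\ge0}\frac{q^{k(k-1)}}{(q;q)_k(b;q)_k}z^k$. Jackson's second $q$-Bessel function is $J_\nu^{(2)}(x;q)=\frac{(q^{\nu+1};q)_\infty}{(q;q)_\infty}\left(\frac{x}{2}\right)^{\nu}{}_0\phi_1\!\left(;q^{\nu+1};q,-\frac{q^{\nu+1}x^2}{4}\right)$, and \[ \mathfrak{j}_\nu(x;q)=q^{\nu^2/4}J^{(2)}_\nu(q^{1/4}x;q)=q^{\nu(\nu+1)/4}\frac{(q^{\nu+1};q)_\infty}{(q;q)_\infty}\left(\frac{x}{2}\right)^{\nu}{}_0\phi_1\!\left(;q^{\nu+1};q,-q^{\nu+3/2}\frac{x^2}{4}\right). \] For negative integer orders $\nu=-n$, $\mathfrak{j}_{-n}$ is defined as the limit $\nu\to-n$ (it equals $(-1)^n\mathfrak{j}_n$).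 *)

From Stdlib Require Import Reals.
From Coquelicot Require Export Coquelicot.
Open Scope C_scope.

Fixpoint qpoch (a : C) (q : R) (k : nat) : C :=
  match k with
  | O => 1
  | S k' => qpoch a q k' * (1 - a * RtoC (q ^ k'))
  end.

Definition qpoch_inf (a : C) (q : R) : C :=
  @lim C_CompleteNormedModule (filtermap (fun n => qpoch a q n) eventually).

Definition CSeries (a : nat -> C) : C :=
  @lim C_CompleteNormedModule (filtermap (sum_n a) eventually).

Definition phi01 (b : C) (q : R) (z : C) : C :=
  CSeries (fun k => RtoC (q ^ (k * (k - 1))) / (qpoch (RtoC q) q k * qpoch b q k)
                     * pow_n z k).

Definition J2 (n : nat) (q : R) (x : C) : C :=
  qpoch_inf (RtoC (q ^ (n + 1))) q / qpoch_inf (RtoC q) q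
  * pow_n (x / 2) n
  * phi01 (RtoC (q ^ (n + 1))) q (- RtoC (q ^ (n + 1)) * pow_n x 2 / 4).

Definition jfrak (n : nat) (q : R) (x : C) : C :=
  RtoC (Rpower q (INR (n * (n + 1)) / 4))
  * (qpoch_inf (RtoC (q ^ (n + 1))) q / qpoch_inf (RtoC q) q)
  * pow_n (x / 2) n
  * phi01 (RtoC (q ^ (n + 1))) q
          (- RtoC (Rpower q (INR n + 3 / 2)) * pow_n x 2 / 4).

From Stdlib Require Import Reals Lra Lia.
From Coquelicot Require Import Coquelicot.
Open Scope C_scope.

(* Put a_k(x) = sum_m (-1)^m q^(m(m+k)) x^m / ((q;q)_m (q;q)_(m+k)), so that
   J^(2)_k(2w) = w^k a_k(w^2) and j_k(2w) = q^(k(k+1)/4) w^k a_k(q^(1/2) w^2).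
   Both identities then say F(x) = (-x;q)_oo for
   F(x) = sum_k W_k x^k a_k(x)^2, W_0 = 1, W_k = q^(k(k-1)/2) + q^(k(k+1)/2).
   The contiguous relations a_k(x) = a_k(qx) - q^(k+1) x a_(k+1)(qx) and
   a_(k+1)(x) = q^(k+1) a_(k+1)(qx) + a_k(qx) make the partial sums of
   F(x) - (1+x) F(qx) telescope to a geometrically small boundary term, so
   F(x) = (1+x) F(qx) = (-x;q)_n F(q^n x), and F(q^n x) -> F(0) = 1. *)

Lemma pow_n_Cpow (x : C) (n : nat) : pow_n x n = x ^ n.
Proof. induction n; simpl; auto. Qed.

Lemma filterlim_C_eps (f : nat -> C) (l : C) :
  filterlim f eventually (locally l) <->
  (forall eps : R, (0 < eps)%R ->
     exists N, forall n, (N <= n)%nat -> (Cmod (f n - l) < eps)%R).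
Proof.
  rewrite filterlim_locally_ball_norm. split.
  - intros H eps Heps. destruct (H (mkposreal eps Heps)) as [N HN].
    exists N. intros n Hn. apply (HN n Hn).
  - intros H eps. destruct (H eps (cond_pos eps)) as [N HN].
    exists N. intros n Hn. apply (HN n Hn).
Qed.

Lemma lim_filtermap_eq (f : nat -> C) (l : C) :
  filterlim f eventually (locally l) ->
  @lim C_CompleteNormedModule (filtermap f eventually) = l.
Proof.
  intros Hf.
  set (F := filtermap f eventually).
  assert (PF : ProperFilter F).
  { apply filtermap_proper_filter, eventually_filter. }
  assert (HF : cauchy F).
  { intros eps. exists l. apply Hf, locally_ball. }
  pose proof (@complete_cauchy C_CompleteNormedModule F PF HF) as Hlim.
  assert (Hlim' : is_filter_lim F (@lim C_CompleteNormedModule F)).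
  { intros P [eps HP]. eapply filter_imp; [exact HP | apply (Hlim eps)]. }
  exact (@is_filter_lim_unique C_AbsRing C_NormedModule F
           (Proper_StrongProper _ PF) _ _ Hlim' Hf).
Qed.

Lemma CSeries_correct (a : nat -> C) (l : C) : is_series a l -> CSeries a = l.
Proof. apply lim_filtermap_eq. Qed.

Lemma is_series_C_unique (a : nat -> C) (l1 l2 : C) :
  is_series a l1 -> is_series a l2 -> l1 = l2.
Proof. apply filterlim_locally_unique. Qed.

Lemma is_series_shift (a : nat -> C) (l : C) :
  is_series a l -> is_series (fun n => a (S n)) (l - a 0%nat).
Proof.
  intros H. apply (@is_series_incr_1 C_AbsRing C_NormedModule).
  change (plus (l - a 0%nat) (a 0%nat)) with (l - a 0%nat + a 0%nat).
  replace (l - a 0%nat + a 0%nat) with l by ring. exact H.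
Qed.

Lemma Cmod_lim_le (f : nat -> C) (l : C) (B : R) :
  filterlim f eventually (locally l) -> (forall n, (Cmod (f n) <= B)%R) ->
  (Cmod l <= B)%R.
Proof.
  intros Hf HB. destruct (Rle_or_lt (Cmod l) B) as [H|H]; auto.
  exfalso. destruct (proj1 (filterlim_C_eps f l) Hf (Cmod l - B)%R) as [N HN]; [lra|].
  specialize (HN N (le_n N)). specialize (HB N).
  assert (Cmod l <= Cmod (f N) + Cmod (f N - l))%R.
  { replace l with (f N - (f N - l)) at 1 by ring.
    eapply Rle_trans; [apply Cmod_triangle|]. rewrite Cmod_opp. lra. }
  lra.
Qed.

Lemma Cmod_minus_le (a b : C) : (Cmod (a - b) <= Cmod a + Cmod b)%R.
Proof. eapply Rle_trans; [apply Cmod_triangle|]. rewrite Cmod_opp. lra. Qed.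

Lemma Cmod_sqr (z : C) : Cmod (z ^ 2) = (Cmod z * Cmod z)%R.
Proof. rewrite Cmod_pow. simpl. ring. Qed.

Lemma filterlim_RtoC (f : nat -> R) (l : R) :
  is_lim_seq f l -> filterlim (fun n => RtoC (f n)) eventually (locally (RtoC l)).
Proof.
  intros H. apply is_lim_seq_Reals in H. apply filterlim_C_eps. intros eps Heps.
  destruct (H eps Heps) as [N HN]. exists N. intros n Hn.
  rewrite <- RtoC_minus, Cmod_R. apply HN. lia.
Qed.

Section GeometricDomination.
Local Open Scope R_scope.

Lemma eventually_halving_dominated (s : nat -> R) (N : nat) :
  (forall n, 0 <= s n) -> (forall n, (N <= n)%nat -> s (S n) <= s n / 2) ->
  exists K, 0 <= K /\ forall n, s n <= K / 2 ^ n.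
Proof.
  intros Hpos Hhalf.
  set (t := fun i => s i * 2 ^ i).
  assert (Ht : forall i, 0 <= t i).
  { intros i. apply Rmult_le_pos; auto. apply pow_le; lra. }
  assert (Hsum : forall M n, (n <= M)%nat -> t n <= sum_f_R0 t M).
  { induction M; intros n Hn.
    - replace n with 0%nat by lia. simpl. lra.
    - simpl. destruct (Nat.eq_dec n (S M)) as [->|Hne].
      + pose proof (cond_pos_sum t M Ht). lra.
      + pose proof (IHM n ltac:(lia)). pose proof (Ht (S M)). lra. }
  assert (Htail : forall d, t (N + d)%nat <= t N).
  { induction d.
    - rewrite Nat.add_0_r. lra.
    - unfold t in *. replace (N + S d)%nat with (S (N + d)) by lia.
      pose proof (Hhalf (N + d)%nat ltac:(lia)).
      pose proof (pow_lt 2 (N + d) ltac:(lra)). simpl. nra. }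
  exists (sum_f_R0 t N). split; [apply cond_pos_sum; auto|].
  intros n. pose proof (pow_lt 2 n ltac:(lra)).
  apply (Rmult_le_reg_r (2 ^ n)); auto.
  unfold Rdiv. rewrite Rmult_assoc, Rinv_l, Rmult_1_r by lra.
  change (t n <= sum_f_R0 t N).
  destruct (Nat.le_gt_cases n N).
  - apply Hsum; auto.
  - replace n with (N + (n - N))%nat by lia.
    eapply Rle_trans; [apply Htail | apply Hsum; auto].
Qed.

Lemma Cmod_sum_n_le (a : nat -> C) (K : R) :
  (forall n, Cmod (a n) <= K / 2 ^ n) ->
  forall N, Cmod (sum_n a N) <= 2 * K - K / 2 ^ N.
Proof.
  intros H N. induction N.
  - rewrite sum_O. specialize (H 0%nat). simpl in *. lra.
  - rewrite sum_Sn. eapply Rle_trans; [apply Cmod_triangle|].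
    specialize (H (S N)). simpl in H |- *.
    assert (E : K / (2 * 2 ^ N) = K / 2 ^ N / 2) by (field; apply pow_nonzero; lra).
    rewrite E in H |- *. lra.
Qed.

Lemma is_series_dominated (a : nat -> C) (K : R) :
  (forall n, Cmod (a n) <= K / 2 ^ n) ->
  exists l, is_series a l /\ Cmod l <= 2 * K.
Proof.
  intros H.
  assert (HK : 0 <= K).
  { specialize (H 0%nat). simpl in H. pose proof (Cmod_ge_0 (a 0%nat)). lra. }
  assert (Hex : ex_series a).
  { apply (ex_series_le a (fun n => K * (/ 2) ^ n)).
    - intros n. change (Cmod (a n) <= K * (/ 2) ^ n).
      rewrite pow_inv. apply H.
    - apply (@ex_series_scal_l R_AbsRing R_NormedModule K (fun n => (/ 2) ^ n)).
      apply ex_series_geom. rewrite Rabs_pos_eq; lra. }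
  destruct Hex as [l Hl]. exists l. split; auto.
  apply (Cmod_lim_le (sum_n a)); auto.
  intros n. eapply Rle_trans; [apply Cmod_sum_n_le; auto|].
  assert (0 <= K / 2 ^ n) by (apply Rdiv_le_0_compat; auto; apply pow_lt; lra).
  lra.
Qed.

Lemma filterlim_geometric_error (f g : nat -> C) (L l : C) (alpha C0 rho : R) :
  filterlim g eventually (locally l) -> 0 <= alpha -> 0 <= rho < 1 ->
  (forall n, Cmod (f n - L) <= alpha * Cmod (g n - l) + C0 * rho ^ n) ->
  filterlim f eventually (locally L).
Proof.
  intros Hg Ha Hrho Hf. apply filterlim_C_eps. intros eps Heps.
  destruct (proj1 (filterlim_C_eps g l) Hg (eps / 3 / (alpha + 1))) as [N1 HN1].
  { apply Rdiv_lt_0_compat; lra. }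
  pose proof (Rabs_pos C0).
  destruct (pow_lt_1_zero rho ltac:(rewrite Rabs_pos_eq; lra) (eps / 3 / (Rabs C0 + 1)))
    as [N2 HN2]; [apply Rdiv_lt_0_compat; lra|].
  exists (N1 + N2)%nat. intros n Hn.
  specialize (HN1 n ltac:(lia)). specialize (HN2 n ltac:(lia)). specialize (Hf n).
  pose proof (pow_le rho n (proj1 Hrho)).
  rewrite Rabs_pos_eq in HN2 by auto.
  assert (H1 : alpha * Cmod (g n - l) <= eps / 3).
  { pose proof (Cmod_ge_0 (g n - l)).
    apply Rle_trans with ((alpha + 1) * (eps / 3 / (alpha + 1))); [nra|].
    right; field; lra. }
  assert (H2 : C0 * rho ^ n <= eps / 3).
  { apply Rle_trans with ((Rabs C0 + 1) * (eps / 3 / (Rabs C0 + 1))).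
    - pose proof (Rle_abs C0). nra.
    - right; field; lra. }
  lra.
Qed.

End GeometricDomination.

Fixpoint qfac (q : R) (m : nat) : R :=
  match m with O => 1 | S m' => qfac q m' * (1 - q ^ S m') end.

(* [qpow_choose2 q k] is q^(k(k-1)/2), see [qpow_choose2_Rpower]. *)
Fixpoint qpow_choose2 (q : R) (k : nat) : R :=
  match k with O => 1 | S k' => qpow_choose2 q k' * q ^ k' end.

Definition bessel_weight (q : R) (k : nat) : R :=
  match k with O => 1 | S _ => qpow_choose2 q k + qpow_choose2 q (S k) end.

Definition bessel_coef (q : R) (k m : nat) : R :=
  (-1) ^ m * q ^ (m * (m + k)) / (qfac q m * qfac q (m + k)).

Section RealEstimates.
Local Open Scope R_scope.
Variable q : R.
Hypothesis Hq : 0 < q < 1.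

Lemma exp_le_exp x y : x <= y -> exp x <= exp y.
Proof. intros [H|<-]; [left; apply exp_increasing, H | lra]. Qed.

Lemma qpow_pos n : 0 < q ^ n.
Proof. apply pow_lt; lra. Qed.

Lemma qpow_le_1 n : q ^ n <= 1.
Proof. induction n; simpl; [lra|]. pose proof (qpow_pos n). nra. Qed.

Lemma qpow_S_lt_1 n : q ^ S n < 1.
Proof. simpl. pose proof (qpow_le_1 n). nra. Qed.

Lemma qpow_antimono m n : (m <= n)%nat -> q ^ n <= q ^ m.
Proof.
  intros Hmn. replace n with (m + (n - m))%nat by lia. rewrite pow_add.
  pose proof (qpow_pos m). pose proof (qpow_le_1 (n - m)). nra.
Qed.

Lemma qfac_pos m : 0 < qfac q m.
Proof.
  induction m; simpl; [lra|].
  apply Rmult_lt_0_compat; auto. pose proof (qpow_S_lt_1 m). simpl in *. lra.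
Qed.

Lemma exp_le_one_minus x : 0 <= x <= q -> exp (- x / (1 - q)) <= 1 - x.
Proof.
  intros Hx.
  assert (E : 1 + x / (1 - x) = / (1 - x)) by (field; lra).
  pose proof (exp_ineq1_le (x / (1 - x))) as H1. rewrite E in H1.
  assert (H2 : exp (- x / (1 - q)) <= exp (- (x / (1 - x)))).
  { apply exp_le_exp. unfold Rdiv. rewrite <- Ropp_mult_distr_l.
    apply Ropp_le_contravar, Rmult_le_compat_l; [lra|].
    apply Rinv_le_contravar; lra. }
  rewrite exp_Ropp in H2.
  assert (/ exp (x / (1 - x)) <= 1 - x).
  { apply Rinv_le_contravar in H1; [|apply Rinv_0_lt_compat; lra].
    rewrite Rinv_inv in H1. exact H1. }
  lra.
Qed.

Lemma exp_le_qfac m : exp (- q * (1 - q ^ m) / (1 - q) ^ 2) <= qfac q m.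
Proof.
  induction m.
  - simpl. replace (- q * (1 - 1) / ((1 - q) * ((1 - q) * 1))) with 0 by (field; lra).
    rewrite exp_0. lra.
  - simpl qfac.
    assert (Hm : exp (- q ^ S m / (1 - q)) <= 1 - q ^ S m).
    { apply exp_le_one_minus. split; [left; apply qpow_pos|].
      rewrite <- (pow_1 q) at 2. apply qpow_antimono. lia. }
    replace (- q * (1 - q ^ S m) / (1 - q) ^ 2) with
      (- q * (1 - q ^ m) / (1 - q) ^ 2 + - q ^ S m / (1 - q)) by (simpl; field; lra).
    rewrite exp_plus. apply Rmult_le_compat; auto; left; apply exp_pos.
Qed.

Lemma qfac_lower_bound : exists d, 0 < d /\ forall m, d <= qfac q m.
Proof.
  exists (exp (- q / (1 - q) ^ 2)). split; [apply exp_pos|].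
  intros m. eapply Rle_trans; [|apply exp_le_qfac].
  apply exp_le_exp. unfold Rdiv.
  assert (0 < / (1 - q) ^ 2) by (apply Rinv_0_lt_compat, pow_lt; lra).
  pose proof (qpow_pos m).
  assert (0 <= q * q ^ m * / (1 - q) ^ 2) by (apply Rmult_le_pos; nra). nra.
Qed.

Lemma eventually_qpow_mul_le_half r : 0 <= r ->
  exists N, forall m, (N <= m)%nat -> q ^ m * r <= 1 / 2.
Proof.
  intros Hr.
  destruct (pow_lt_1_zero q ltac:(rewrite Rabs_pos_eq; lra) (1 / (2 * (r + 1))))
    as [N HN]; [apply Rdiv_lt_0_compat; lra|].
  exists N. intros m Hm. specialize (HN m Hm).
  rewrite Rabs_pos_eq in HN by (left; apply qpow_pos).
  apply (Rmult_lt_compat_r (2 * (r + 1))) in HN; [|lra].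
  replace (1 / (2 * (r + 1)) * (2 * (r + 1))) with 1 in HN by (field; lra).
  pose proof (qpow_pos m). nra.
Qed.

Lemma Rabs_bessel_coef_le d k n : (forall m, d <= qfac q m) -> 0 < d ->
  Rabs (bessel_coef q k n) <= q ^ (n * n) / (d * d).
Proof.
  intros Hd Hd0. unfold bessel_coef.
  pose proof (qfac_pos n). pose proof (qfac_pos (n + k)).
  rewrite Rabs_div by nra.
  rewrite Rabs_mult, pow_1_abs, Rmult_1_l, Rabs_pos_eq by (left; apply qpow_pos).
  rewrite Rabs_pos_eq by nra.
  pose proof (qpow_antimono (n * n) (n * (n + k)) ltac:(nia)).
  pose proof (qpow_pos (n * (n + k))).
  assert (/ (qfac q n * qfac q (n + k)) <= / (d * d)).
  { apply Rinv_le_contravar; [nra|]. apply Rmult_le_compat; auto; lra. }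
  assert (0 < / (qfac q n * qfac q (n + k))) by (apply Rinv_0_lt_compat; nra).
  apply Rmult_le_compat; lra.
Qed.

(* The Gaussian factor q^(m^2) beats any geometric growth r^m. *)
Lemma bessel_coef_dominated r : 0 <= r ->
  exists K, 0 <= K /\ forall k m j, Rabs (bessel_coef q k (m + j)) * r ^ m <= K / 2 ^ m.
Proof.
  intros Hr. destruct qfac_lower_bound as [d [Hd Hdm]].
  destruct (eventually_qpow_mul_le_half r Hr) as [N HN].
  assert (Hdd : 0 < / (d * d)) by (apply Rinv_0_lt_compat; nra).
  destruct (eventually_halving_dominated (fun m => q ^ (m * m) * r ^ m / (d * d)) N)
    as [K [HK0 HK]].
  - intros m. pose proof (qpow_pos (m * m)). pose proof (pow_le r m Hr).
    unfold Rdiv. repeat apply Rmult_le_pos; lra.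
  - intros m Hm. replace (S m * S m)%nat with (m * m + (m + (m + 1)))%nat by ring.
    rewrite pow_add.
    pose proof (qpow_antimono m (m + (m + 1)) ltac:(lia)).
    pose proof (HN m Hm). pose proof (qpow_pos (m * m)).
    pose proof (pow_le r m Hr). pose proof (qpow_pos (m + (m + 1))).
    assert (0 <= q ^ (m * m) * r ^ m) by nra.
    assert (q ^ (m + (m + 1)) * r <= 1 / 2) by nra.
    unfold Rdiv. simpl pow at 3.
    apply Rle_trans with (q ^ (m * m) * r ^ m * / (d * d) * (q ^ (m + (m + 1)) * r));
      [right; ring|].
    apply Rle_trans with (q ^ (m * m) * r ^ m * / (d * d) * (1 / 2)); [|right; field; nra].
    apply Rmult_le_compat_l; [nra | lra].
  - exists K. split; auto. intros k m j. eapply Rle_trans; [|apply HK].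
    pose proof (Rabs_bessel_coef_le d k (m + j) Hdm Hd).
    pose proof (qpow_antimono (m * m) ((m + j) * (m + j)) ltac:(nia)).
    pose proof (pow_le r m Hr).
    unfold Rdiv in *.
    apply Rle_trans with (q ^ (m * m) * / (d * d) * r ^ m); [|right; ring].
    apply Rmult_le_compat_r; auto. nra.
Qed.

Lemma qpow_choose2_pos k : 0 < qpow_choose2 q k.
Proof. induction k; simpl; [lra|]. apply Rmult_lt_0_compat; auto. apply qpow_pos. Qed.

Lemma qpow_choose2_S_le k : qpow_choose2 q (S k) <= qpow_choose2 q k.
Proof. simpl. pose proof (qpow_choose2_pos k). pose proof (qpow_le_1 k). nra. Qed.

Lemma bessel_weight_bounds k : 0 <= bessel_weight q k <= 2 * qpow_choose2 q k.
Proof.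
  destruct k; simpl; [lra|].
  pose proof (qpow_choose2_S_le (S k)). pose proof (qpow_choose2_pos (S (S k))).
  simpl in *. lra.
Qed.

Lemma qpow_choose2_dominated r : 0 <= r ->
  exists K, 0 <= K /\ forall k, qpow_choose2 q k * r ^ k <= K / 2 ^ k.
Proof.
  intros Hr. destruct (eventually_qpow_mul_le_half r Hr) as [N HN].
  apply (eventually_halving_dominated (fun k => qpow_choose2 q k * r ^ k) N).
  - intros k. pose proof (qpow_choose2_pos k). pose proof (pow_le r k Hr). nra.
  - intros k Hk. simpl. specialize (HN k Hk).
    pose proof (qpow_choose2_pos k). pose proof (pow_le r k Hr).
    replace (qpow_choose2 q k * q ^ k * (r * r ^ k))
      with (qpow_choose2 q k * r ^ k * (q ^ k * r)) by ring.
    assert (0 <= qpow_choose2 q k * r ^ k) by nra. nra.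
Qed.

End RealEstimates.

Definition bessel_term (q : R) (k : nat) (x : C) (m : nat) : C :=
  RtoC (bessel_coef q k m) * x ^ m.

Definition bessel_entire (q : R) (k : nat) (x : C) : C := CSeries (bessel_term q k x).

Section BesselEntire.
Variable q : R.
Hypothesis Hq : (0 < q < 1)%R.

Lemma bessel_term_dominated r : (0 <= r)%R ->
  exists K, (0 <= K)%R /\ forall k x m, (Cmod x <= r)%R ->
    (Cmod (bessel_term q k x m) <= K / 2 ^ m)%R.
Proof.
  intros Hr. destruct (bessel_coef_dominated q Hq r Hr) as [K [HK H]].
  exists K. split; auto. intros k x m Hx. eapply Rle_trans; [|apply (H k m 0%nat)].
  unfold bessel_term. rewrite Nat.add_0_r, Cmod_mult, Cmod_R, Cmod_pow.
  apply Rmult_le_compat_l; [apply Rabs_pos|].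
  apply pow_incr. split; auto. apply Cmod_ge_0.
Qed.

Lemma is_series_bessel_entire k x : is_series (bessel_term q k x) (bessel_entire q k x).
Proof.
  destruct (bessel_term_dominated (Cmod x) (Cmod_ge_0 x)) as [K [_ H]].
  destruct (is_series_dominated (bessel_term q k x) K) as [l [Hl _]].
  { intros m. apply H, Rle_refl. }
  unfold bessel_entire. rewrite (CSeries_correct _ l Hl). exact Hl.
Qed.

Lemma bessel_entire_bounded r : (0 <= r)%R ->
  exists M, (0 <= M)%R /\ forall k x, (Cmod x <= r)%R -> (Cmod (bessel_entire q k x) <= M)%R.
Proof.
  intros Hr. destruct (bessel_term_dominated r Hr) as [K [HK H]].
  exists (2 * K)%R. split; [lra|]. intros k x Hx.
  destruct (is_series_dominated (bessel_term q k x) K) as [l [Hl Hb]].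
  { intros m. apply H, Hx. }
  unfold bessel_entire. rewrite (CSeries_correct _ l Hl). exact Hb.
Qed.

Lemma bessel_entire_near0 r : (0 <= r)%R ->
  exists K, (0 <= K)%R /\ forall x, (Cmod x <= r)%R ->
    (Cmod (bessel_entire q 0 x - 1) <= K * Cmod x)%R.
Proof.
  intros Hr. destruct (bessel_coef_dominated q Hq r Hr) as [K [HK H]].
  exists (2 * K)%R. split; [lra|]. intros x Hx.
  pose proof (is_series_shift _ _ (is_series_bessel_entire 0 x)) as Hs.
  assert (E0 : bessel_term q 0 x 0 = 1).
  { unfold bessel_term, bessel_coef. simpl. rewrite Cmult_1_r. f_equal. field. }
  rewrite E0 in Hs.
  destruct (is_series_dominated (fun m => bessel_term q 0 x (S m)) (Cmod x * K))
    as [l [Hl Hb]].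
  { intros m. unfold bessel_term. rewrite Cmod_mult, Cmod_R, Cmod_pow. simpl pow.
    specialize (H 0%nat m 1%nat). rewrite Nat.add_1_r in H.
    pose proof (Cmod_ge_0 x). pose proof (Rabs_pos (bessel_coef q 0 (S m))).
    assert (Cmod x ^ m <= r ^ m)%R by (apply pow_incr; lra).
    apply Rle_trans with (Cmod x * (Rabs (bessel_coef q 0 (S m)) * r ^ m))%R.
    - rewrite <- Rmult_assoc, (Rmult_comm _ (Cmod x)), Rmult_assoc.
      apply Rmult_le_compat_l; auto. apply Rmult_le_compat_l; auto.
    - unfold Rdiv. rewrite Rmult_assoc. apply Rmult_le_compat_l; auto. }
  rewrite (is_series_C_unique _ _ _ Hs Hl). lra.
Qed.

Lemma bessel_coef_contiguous1 k m :
  (bessel_coef q k (S m) * (1 - q ^ S m) = - q ^ S k * (bessel_coef q (S k) m * q ^ m))%R.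
Proof.
  unfold bessel_coef.
  replace (S m + k)%nat with (S (m + k)) by lia.
  replace (m + S k)%nat with (S (m + k)) by lia.
  replace (S m * S (m + k))%nat with (S k + m * S (m + k) + m)%nat by ring.
  rewrite !pow_add. simpl qfac.
  pose proof (qfac_pos q Hq m). pose proof (qfac_pos q Hq (m + k)).
  pose proof (qpow_S_lt_1 q Hq m). pose proof (qpow_S_lt_1 q Hq (m + k)).
  simpl pow at 1. simpl in *. field. repeat split; lra.
Qed.

Lemma bessel_coef_contiguous2 k m :
  (bessel_coef q (S k) m * (1 - q ^ (m + S k)) = bessel_coef q k m * q ^ m)%R.
Proof.
  unfold bessel_coef.
  replace (m + S k)%nat with (S (m + k)) by lia.
  replace (m * S (m + k))%nat with (m * (m + k) + m)%nat by ring.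
  rewrite !pow_add. simpl qfac.
  pose proof (qfac_pos q Hq m). pose proof (qfac_pos q Hq (m + k)).
  pose proof (qpow_S_lt_1 q Hq (m + k)).
  simpl in *. field. lra.
Qed.

Lemma bessel_entire_contiguous1 k x :
  bessel_entire q k x
  = bessel_entire q k (RtoC q * x) - RtoC (q ^ S k) * x * bessel_entire q (S k) (RtoC q * x).
Proof.
  set (f := fun m => bessel_term q k x m - bessel_term q k (RtoC q * x) m).
  assert (Hf : is_series f (bessel_entire q k x - bessel_entire q k (RtoC q * x))).
  { exact (is_series_minus _ _ _ _ (is_series_bessel_entire k x)
             (is_series_bessel_entire k (RtoC q * x))). }
  apply is_series_shift in Hf.
  assert (Hf0 : f 0%nat = 0) by (unfold f, bessel_term; simpl; ring).
  rewrite Hf0 in Hf.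
  assert (Hg := is_series_scal (- RtoC (q ^ S k) * x) _ _
                  (is_series_bessel_entire (S k) (RtoC q * x))).
  assert (E : forall m, f (S m)
      = scal (- RtoC (q ^ S k) * x) (bessel_term q (S k) (RtoC q * x) m)).
  { intros m. unfold f, bessel_term. change (scal ?a ?b) with (a * b).
    rewrite !Cpow_mult_l, <- !RtoC_pow.
    transitivity (RtoC (bessel_coef q k (S m) * (1 - q ^ S m)) * x ^ S m).
    { rewrite RtoC_mult, RtoC_minus. ring. }
    rewrite bessel_coef_contiguous1, !RtoC_mult, RtoC_opp. simpl. ring. }
  apply (is_series_ext _ _ _ E) in Hf.
  pose proof (is_series_C_unique _ _ _ Hf Hg) as Heq.
  change (scal ?a ?b) with (a * b) in Heq.
  replace (bessel_entire q k x)
    with (bessel_entire q k x - bessel_entire q k (RtoC q * x) - 0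
          + bessel_entire q k (RtoC q * x)) by ring.
  rewrite Heq. ring.
Qed.

Lemma bessel_entire_contiguous2 k x :
  bessel_entire q (S k) x
  = RtoC (q ^ S k) * bessel_entire q (S k) (RtoC q * x) + bessel_entire q k (RtoC q * x).
Proof.
  pose proof (is_series_minus _ _ _ _ (is_series_bessel_entire (S k) x)
     (is_series_scal (RtoC (q ^ S k)) _ _ (is_series_bessel_entire (S k) (RtoC q * x)))) as H.
  assert (E : forall m,
     minus (bessel_term q (S k) x m) (scal (RtoC (q ^ S k)) (bessel_term q (S k) (RtoC q * x) m))
     = bessel_term q k (RtoC q * x) m).
  { intros m. unfold bessel_term, minus.
    change (plus ?a ?b) with (a + b). change (opp ?a) with (- a). change (scal ?a ?b) with (a * b).
    match goal with |- ?a = ?b => change (@eq C a b) end.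
    rewrite !Cpow_mult_l, <- !RtoC_pow.
    transitivity (RtoC (bessel_coef q (S k) m * (1 - q ^ (m + S k))) * x ^ m).
    { rewrite RtoC_mult, RtoC_minus, pow_add, RtoC_mult. ring. }
    rewrite bessel_coef_contiguous2, RtoC_mult. ring. }
  apply (is_series_ext _ _ _ E) in H.
  pose proof (is_series_C_unique _ _ _ H (is_series_bessel_entire k (RtoC q * x))) as Heq.
  unfold minus in Heq.
  change (plus ?a ?b) with (a + b) in Heq. change (opp ?a) with (- a) in Heq.
  change (scal ?a ?b) with (a * b) in Heq.
  rewrite <- Heq. ring.
Qed.

End BesselEntire.

Definition bessel_square_term (q : R) (x : C) (k : nat) : C :=
  RtoC (bessel_weight q k) * x ^ k * bessel_entire q k x ^ 2.

Definition bessel_square_sum (q : R) (x : C) : C := CSeries (bessel_square_term q x).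

Definition telescope_boundary (q : R) (u : C) (B : nat -> C) (N : nat) : C :=
  u * (RtoC (qpow_choose2 q (S (S N))) * (RtoC q * u) ^ S N * B (S N) ^ 2
       - RtoC (qpow_choose2 q N) * (RtoC q * u) ^ N * B N ^ 2)
  - 2 * RtoC (qpow_choose2 q (S N)) * (RtoC q * u) ^ S N * B N * B (S N).

(* With A k = a_k(u) and B k = a_k(qu), the two contiguous relations make the
   partial sums of F(u) - (1+u) F(qu) collapse to a boundary term. *)
Lemma sum_n_weighted_squares_telescope (q : R) (u : C) (A B : nat -> C) :
  (forall k, A k = B k - RtoC (q ^ S k) * u * B (S k)) ->
  (forall k, A (S k) = RtoC (q ^ S k) * B (S k) + B k) ->
  forall N, sum_n (fun k => RtoC (bessel_weight q k) * u ^ k * A k ^ 2) N =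
    (1 + u) * sum_n (fun k => RtoC (bessel_weight q k) * (RtoC q * u) ^ k * B k ^ 2) N
    + telescope_boundary q u B N.
Proof.
  intros H1 H2 N. unfold telescope_boundary. induction N.
  - rewrite !sum_O. match goal with |- ?a = ?b => change (@eq C a b) end.
    rewrite H1. simpl. rewrite !RtoC_mult. unfold bessel_weight. simpl.
    replace (RtoC (1 * q)) with (RtoC q) by (f_equal; ring).
    replace (RtoC (q * 1)) with (RtoC q) by (f_equal; ring).
    ring.
  - rewrite !sum_Sn. change (plus ?a ?b) with (a + b). rewrite IHN. clear IHN.
    assert (EB : B N = A (S N) - RtoC (q ^ S N) * B (S N)) by (rewrite H2; ring).
    rewrite EB, (H1 (S N)).
    unfold bessel_weight. simpl qpow_choose2.
    rewrite !RtoC_plus, !RtoC_mult, !RtoC_pow, !Cpow_mult_l. simpl Cpow.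
    generalize (RtoC q ^ N) as t. generalize (u ^ N) as p.
    generalize (RtoC (qpow_choose2 q N)) as g.
    intros. match goal with |- ?a = ?b => change (@eq C a b) end. ring.
Qed.

Lemma Cmod_telescope_shape_le (u b0 b1 c1 c2 c3 : C) (M e : R) :
  (Cmod b0 <= M)%R -> (Cmod b1 <= M)%R ->
  (Cmod c1 <= e)%R -> (Cmod c2 <= e)%R -> (Cmod c3 <= e)%R ->
  (Cmod (u * (c1 * b1 ^ 2 - c2 * b0 ^ 2) - 2 * c3 * b0 * b1)
   <= (2 * Cmod u + 2) * (e * (M * M)))%R.
Proof.
  intros H0 H1 Hc1 Hc2 Hc3.
  assert (Hprod : forall a b c : C, (Cmod a <= e)%R -> (Cmod b <= M)%R -> (Cmod c <= M)%R ->
            (Cmod (a * (b * c)) <= e * (M * M))%R).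
  { intros a b c Ha Hb Hc. rewrite !Cmod_mult.
    pose proof (Cmod_ge_0 a). pose proof (Cmod_ge_0 b). pose proof (Cmod_ge_0 c).
    apply Rmult_le_compat; auto; [nra|]. apply Rmult_le_compat; auto. }
  assert (T1 := Hprod c1 b1 b1 Hc1 H1 H1). assert (T2 := Hprod c2 b0 b0 Hc2 H0 H0).
  assert (T3 := Hprod c3 b0 b1 Hc3 H0 H1).
  replace (c1 * b1 ^ 2) with (c1 * (b1 * b1)) by ring.
  replace (c2 * b0 ^ 2) with (c2 * (b0 * b0)) by ring.
  replace (2 * c3 * b0 * b1) with (2 * (c3 * (b0 * b1))) by ring.
  eapply Rle_trans; [apply Cmod_minus_le|].
  rewrite Cmod_mult, (Cmod_mult 2), Cmod_R, Rabs_pos_eq by lra.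
  pose proof (Cmod_minus_le (c1 * (b1 * b1)) (c2 * (b0 * b0))).
  assert (Cmod u * Cmod (c1 * (b1 * b1) - c2 * (b0 * b0)) <= Cmod u * (2 * (e * (M * M))))%R
    by (apply Rmult_le_compat_l; [apply Cmod_ge_0 | lra]).
  lra.
Qed.

Section SquareSum.
Variable q : R.
Hypothesis Hq : (0 < q < 1)%R.

Lemma qpow_choose2_antimono j k : (j <= k)%nat -> (qpow_choose2 q k <= qpow_choose2 q j)%R.
Proof.
  induction 1; [lra|]. pose proof (qpow_choose2_S_le q Hq m). lra.
Qed.

Lemma Cmod_qpow_choose2_mul_le (v : C) (K : R) :
  (forall k, qpow_choose2 q k * Cmod v ^ k <= K / 2 ^ k)%R ->
  forall j k, (j <= k)%nat -> (Cmod (RtoC (qpow_choose2 q k) * v ^ j) <= K / 2 ^ j)%R.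
Proof.
  intros HK j k Hjk. eapply Rle_trans; [|apply (HK j)].
  rewrite Cmod_mult, Cmod_R, Cmod_pow, Rabs_pos_eq by (left; apply qpow_choose2_pos; lra).
  apply Rmult_le_compat_r; [apply pow_le, Cmod_ge_0 | apply qpow_choose2_antimono; auto].
Qed.

Lemma telescope_boundary_geometric (u : C) (B : nat -> C) (M : R) :
  (forall k, Cmod (B k) <= M)%R ->
  exists C0, forall N, (Cmod (telescope_boundary q u B N) <= C0 / 2 ^ N)%R.
Proof.
  intros HB.
  destruct (qpow_choose2_dominated q Hq (Cmod (RtoC q * u)) (Cmod_ge_0 _)) as [K [HK Hc]].
  pose proof (Cmod_qpow_choose2_mul_le _ K Hc) as Hc'.
  exists ((2 * Cmod u + 2) * (K * (M * M)))%R. intros N.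
  assert (Hhalf : (K / 2 ^ S N <= K / 2 ^ N)%R).
  { unfold Rdiv. apply Rmult_le_compat_l; auto.
    apply Rinv_le_contravar; [apply pow_lt; lra|]. simpl. pose proof (pow_lt 2 N). lra. }
  unfold telescope_boundary.
  replace (u * (RtoC (qpow_choose2 q (S (S N))) * (RtoC q * u) ^ S N * B (S N) ^ 2
             - RtoC (qpow_choose2 q N) * (RtoC q * u) ^ N * B N ^ 2)
           - 2 * RtoC (qpow_choose2 q (S N)) * (RtoC q * u) ^ S N * B N * B (S N))
    with (u * ((RtoC (qpow_choose2 q (S (S N))) * (RtoC q * u) ^ S N) * B (S N) ^ 2
               - (RtoC (qpow_choose2 q N) * (RtoC q * u) ^ N) * B N ^ 2)
          - 2 * (RtoC (qpow_choose2 q (S N)) * (RtoC q * u) ^ S N) * B N * B (S N)) by ring.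
  eapply Rle_trans.
  { apply (Cmod_telescope_shape_le _ _ _ _ _ _ M (K / 2 ^ N)); try apply HB.
    - eapply Rle_trans; [apply Hc'; lia | exact Hhalf].
    - apply Hc'; lia.
    - eapply Rle_trans; [apply Hc'; lia | exact Hhalf]. }
  right. field. apply pow_nonzero. lra.
Qed.

Lemma Cmod_bessel_square_term_le (r M : R) x k :
  (forall k x, Cmod x <= r -> Cmod (bessel_entire q k x) <= M)%R -> (Cmod x <= r)%R ->
  (Cmod (bessel_square_term q x k) <= 2 * (M * M) * (qpow_choose2 q k * Cmod x ^ k))%R.
Proof.
  intros HM Hx. unfold bessel_square_term.
  rewrite !Cmod_mult, Cmod_R, Cmod_pow, Cmod_sqr.
  pose proof (bessel_weight_bounds q Hq k) as [HW0 HW]. rewrite Rabs_pos_eq by lra.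
  pose proof (HM k x Hx). pose proof (Cmod_ge_0 (bessel_entire q k x)).
  pose proof (pow_le _ k (Cmod_ge_0 x)).
  assert (Cmod (bessel_entire q k x) * Cmod (bessel_entire q k x) <= M * M)%R
    by (apply Rmult_le_compat; lra).
  apply Rle_trans with (2 * qpow_choose2 q k * Cmod x ^ k * (M * M))%R; [|right; ring].
  pose proof (qpow_choose2_pos q Hq k).
  apply Rmult_le_compat; try nra.
Qed.

Lemma is_series_bessel_square_sum x :
  is_series (bessel_square_term q x) (bessel_square_sum q x).
Proof.
  destruct (bessel_entire_bounded q Hq (Cmod x) (Cmod_ge_0 x)) as [M [HM HaM]].
  destruct (qpow_choose2_dominated q Hq (Cmod x) (Cmod_ge_0 x)) as [K [HK Hc]].
  destruct (is_series_dominated (bessel_square_term q x) (2 * (M * M) * K)) as [l [Hl _]].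
  { intros k. eapply Rle_trans; [apply (Cmod_bessel_square_term_le (Cmod x)); auto; lra|].
    apply Rle_trans with (2 * (M * M) * (K / 2 ^ k))%R; [|right; unfold Rdiv; ring].
    apply Rmult_le_compat_l; [nra | apply Hc]. }
  unfold bessel_square_sum. rewrite (CSeries_correct _ l Hl). exact Hl.
Qed.

Lemma bessel_square_sum_funeq u :
  bessel_square_sum q u = (1 + u) * bessel_square_sum q (RtoC q * u).
Proof.
  set (B := fun k => bessel_entire q k (RtoC q * u)).
  pose proof (sum_n_weighted_squares_telescope q u (fun k => bessel_entire q k u) B
    (fun k => bessel_entire_contiguous1 q Hq k u)
    (fun k => bessel_entire_contiguous2 q Hq k u)) as Htel.
  destruct (bessel_entire_bounded q Hq (Cmod (RtoC q * u)) (Cmod_ge_0 _)) as [M [_ HM]].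
  destruct (telescope_boundary_geometric u B M) as [C0 HC0].
  { intros k. apply (HM k (RtoC q * u)), Rle_refl. }
  apply (is_series_C_unique (bessel_square_term q u)); [apply is_series_bessel_square_sum|].
  apply (filterlim_geometric_error _ (sum_n (bessel_square_term q (RtoC q * u)))
           _ (bessel_square_sum q (RtoC q * u)) (Cmod (1 + u)) C0 (/ 2));
    [apply is_series_bessel_square_sum | apply Cmod_ge_0 | lra |].
  intros N.
  change (sum_n (bessel_square_term q u) N)
    with (sum_n (fun k => RtoC (bessel_weight q k) * u ^ k * bessel_entire q k u ^ 2) N).
  rewrite Htel.
  change (sum_n (fun k => RtoC (bessel_weight q k) * (RtoC q * u) ^ k * B k ^ 2) N)
    with (sum_n (bessel_square_term q (RtoC q * u)) N).
  set (SN := sum_n (bessel_square_term q (RtoC q * u)) N).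
  set (F := bessel_square_sum q (RtoC q * u)).
  set (T := telescope_boundary q u B N).
  replace ((1 + u) * SN + T - (1 + u) * F) with ((1 + u) * (SN - F) + T) by ring.
  eapply Rle_trans; [apply Cmod_triangle|]. rewrite Cmod_mult.
  apply Rplus_le_compat_l. rewrite pow_inv. apply HC0.
Qed.

Lemma bessel_square_term_0 x : bessel_square_term q x 0 = bessel_entire q 0 x ^ 2.
Proof. unfold bessel_square_term. simpl. rewrite Cmult_1_r, Cmult_1_l. reflexivity. Qed.

Lemma bessel_square_sum_sub_head_le r : (0 <= r)%R ->
  exists C0, (0 <= C0)%R /\ forall x, (Cmod x <= r)%R ->
    (Cmod (bessel_square_sum q x - bessel_entire q 0 x ^ 2) <= C0 * Cmod x)%R.
Proof.
  intros Hr. destruct (bessel_entire_bounded q Hq r Hr) as [M [HM HaM]].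
  destruct (qpow_choose2_dominated q Hq r Hr) as [Kc [HKc Hc]].
  exists (2 * (2 * (M * M) * Kc))%R. split; [apply Rmult_le_pos; nra|].
  intros x Hx. pose proof (Cmod_ge_0 x).
  pose proof (is_series_shift _ _ (is_series_bessel_square_sum x)) as Hs.
  rewrite bessel_square_term_0 in Hs.
  destruct (is_series_dominated (fun k => bessel_square_term q x (S k))
              (Cmod x * (2 * (M * M) * Kc))) as [l [Hl Hb]].
  2: { rewrite (is_series_C_unique _ _ _ Hs Hl). lra. }
  intros k. eapply Rle_trans; [apply (Cmod_bessel_square_term_le r); auto|].
  pose proof (qpow_choose2_S_le q Hq k). pose proof (Hc k).
  pose proof (qpow_choose2_pos q Hq (S k)).
  assert (Cmod x ^ k <= r ^ k)%R by (apply pow_incr; lra).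
  pose proof (pow_le _ k (Cmod_ge_0 x)).
  assert (Hk : (qpow_choose2 q (S k) * Cmod x ^ S k
                <= Cmod x * (qpow_choose2 q k * r ^ k))%R).
  { simpl pow. apply Rle_trans with (Cmod x * (qpow_choose2 q (S k) * Cmod x ^ k))%R;
      [right; ring|].
    apply Rmult_le_compat_l; auto. apply Rmult_le_compat; lra. }
  apply Rle_trans with (Cmod x * (2 * (M * M)) * (qpow_choose2 q k * r ^ k))%R.
  - apply Rle_trans with (2 * (M * M) * (Cmod x * (qpow_choose2 q k * r ^ k)))%R;
      [apply Rmult_le_compat_l; [nra | exact Hk] | right; ring].
  - apply Rle_trans with (Cmod x * (2 * (M * M)) * (Kc / 2 ^ k))%R;
      [apply Rmult_le_compat_l; [nra | exact (Hc k)] | right; unfold Rdiv; ring].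
Qed.

Lemma bessel_square_sum_near0 r : (0 <= r)%R ->
  exists C0, (0 <= C0)%R /\ forall x, (Cmod x <= r)%R ->
    (Cmod (bessel_square_sum q x - 1) <= C0 * Cmod x)%R.
Proof.
  intros Hr. destruct (bessel_entire_near0 q Hq r Hr) as [K [HK HaK]].
  destruct (bessel_entire_bounded q Hq r Hr) as [M [HM HaM]].
  destruct (bessel_square_sum_sub_head_le r Hr) as [C1 [HC1 Htail]].
  exists (C1 + K * (M + 1))%R. split; [nra|].
  intros x Hx. specialize (HaK x Hx). specialize (HaM 0%nat x Hx). specialize (Htail x Hx).
  replace (bessel_square_sum q x - 1)
    with (bessel_square_sum q x - bessel_entire q 0 x ^ 2
          + (bessel_entire q 0 x - 1) * (bessel_entire q 0 x + 1)) by ring.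
  eapply Rle_trans; [apply Cmod_triangle|]. rewrite Cmod_mult.
  assert (Cmod (bessel_entire q 0 x + 1) <= M + 1)%R.
  { eapply Rle_trans; [apply Cmod_triangle|]. rewrite Cmod_1. lra. }
  pose proof (Cmod_ge_0 (bessel_entire q 0 x - 1)). pose proof (Cmod_ge_0 x).
  assert (Cmod (bessel_entire q 0 x - 1) * Cmod (bessel_entire q 0 x + 1)
          <= K * Cmod x * (M + 1))%R by (apply Rmult_le_compat; auto; apply Cmod_ge_0).
  nra.
Qed.

End SquareSum.

Section QPochhammerLimit.
Variable q : R.
Hypothesis Hq : (0 < q < 1)%R.

Lemma qpoch_mul_funeq (G : C -> C) :
  (forall u, G u = (1 + u) * G (RtoC q * u)) ->
  forall u n, qpoch (- u) q n * G (RtoC (q ^ n) * u) = G u.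
Proof.
  intros HG u n. induction n; simpl qpoch.
  - rewrite !Cmult_1_l. reflexivity.
  - rewrite <- IHn, (HG (RtoC (q ^ n) * u)).
    replace (RtoC q * (RtoC (q ^ n) * u)) with (RtoC (q ^ S n) * u)
      by (simpl; rewrite RtoC_mult; ring).
    ring.
Qed.

Lemma Cmod_qpoch_le u n :
  (Cmod (qpoch (- u) q n) <= exp (Cmod u * (1 - q ^ n) / (1 - q)))%R.
Proof.
  induction n; simpl qpoch.
  - rewrite Cmod_1, pow_O. replace (Cmod u * (1 - 1) / (1 - q))%R with 0%R by (field; lra).
    rewrite exp_0. lra.
  - rewrite Cmod_mult.
    assert (H1 : (Cmod (1 - - u * RtoC (q ^ n)) <= 1 + Cmod u * q ^ n)%R).
    { replace (1 - - u * RtoC (q ^ n)) with (1 + u * RtoC (q ^ n)) by ring.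
      eapply Rle_trans; [apply Cmod_triangle|].
      rewrite Cmod_1, Cmod_mult, Cmod_R, Rabs_pos_eq by (left; apply qpow_pos; lra). lra. }
    pose proof (exp_ineq1_le (Cmod u * q ^ n)).
    replace (Cmod u * (1 - q ^ S n) / (1 - q))%R
      with (Cmod u * (1 - q ^ n) / (1 - q) + Cmod u * q ^ n)%R by (simpl; field; lra).
    rewrite exp_plus. apply Rmult_le_compat; try apply Cmod_ge_0; lra.
Qed.

(* Iterating the equation gives G(u) = (-u;q)_n G(q^n u), and G(q^n u) -> 1. *)
Lemma qpoch_cvg_of_funeq (G : C -> C) :
  (forall u, G u = (1 + u) * G (RtoC q * u)) ->
  (forall r, (0 <= r)%R -> exists C0, (0 <= C0)%R /\
     forall x, (Cmod x <= r)%R -> (Cmod (G x - 1) <= C0 * Cmod x)%R) ->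
  forall u, filterlim (fun n => qpoch (- u) q n) eventually (locally (G u)).
Proof.
  intros HG Hnear u.
  destruct (Hnear (Cmod u) (Cmod_ge_0 u)) as [C0 [HC0 HG1]].
  set (E := exp (Cmod u / (1 - q))).
  apply (filterlim_geometric_error _ (fun _ => 0) _ 0 0 (E * C0 * Cmod u) q);
    [apply filterlim_const | lra | lra |].
  intros n. rewrite Rmult_0_l, Rplus_0_l.
  rewrite <- (qpoch_mul_funeq G HG u n).
  replace (qpoch (- u) q n - qpoch (- u) q n * G (RtoC (q ^ n) * u))
    with (- (qpoch (- u) q n * (G (RtoC (q ^ n) * u) - 1))) by ring.
  rewrite Cmod_opp, Cmod_mult.
  pose proof (qpow_pos q Hq n). pose proof (qpow_le_1 q Hq n). pose proof (Cmod_ge_0 u).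
  assert (Hx : (Cmod (RtoC (q ^ n) * u) <= Cmod u)%R).
  { rewrite Cmod_mult, Cmod_R, Rabs_pos_eq by lra. nra. }
  specialize (HG1 _ Hx). rewrite Cmod_mult, Cmod_R, Rabs_pos_eq in HG1 by lra.
  assert (HP : (Cmod (qpoch (- u) q n) <= E)%R).
  { eapply Rle_trans; [apply Cmod_qpoch_le|]. apply exp_le_exp.
    unfold Rdiv. apply Rmult_le_compat_r; [left; apply Rinv_0_lt_compat; lra | nra]. }
  apply Rle_trans with (E * (C0 * (q ^ n * Cmod u)))%R; [|right; ring].
  apply Rmult_le_compat; auto using Cmod_ge_0.
Qed.

End QPochhammerLimit.

Section SquareSumProduct.
Variable q : R.
Hypothesis Hq : (0 < q < 1)%R.

Lemma bessel_square_sum_eq_qpoch_inf u : bessel_square_sum q u = qpoch_inf (- u) q.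
Proof.
  symmetry. apply lim_filtermap_eq, qpoch_cvg_of_funeq; auto.
  - apply bessel_square_sum_funeq; auto.
  - apply bessel_square_sum_near0; auto.
Qed.

Lemma is_series_bessel_square_tail u :
  is_series (fun k => bessel_square_term q u (S k))
    (qpoch_inf (- u) q - bessel_entire q 0 u ^ 2).
Proof.
  rewrite <- bessel_square_sum_eq_qpoch_inf.
  rewrite <- bessel_square_term_0.
  apply is_series_shift, is_series_bessel_square_sum; auto.
Qed.

End SquareSumProduct.

Section Normalisation.
Variable q : R.
Hypothesis Hq : (0 < q < 1)%R.

Lemma qpoch_q m : qpoch (RtoC q) q m = RtoC (qfac q m).
Proof.
  induction m; simpl; [reflexivity|].
  rewrite IHm, RtoC_mult, RtoC_minus, RtoC_mult. reflexivity.
Qed.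

Lemma qpoch_qpow_S k m :
  qpoch (RtoC (q ^ (k + 1))) q m = RtoC (qfac q (k + m) / qfac q k).
Proof.
  pose proof (qfac_pos q Hq k). induction m; simpl.
  - rewrite Nat.add_0_r. f_equal. field. lra.
  - rewrite IHm, <- RtoC_mult, <- RtoC_minus, <- RtoC_mult.
    f_equal. replace (k + S m)%nat with (S (k + m)) by lia. simpl qfac.
    replace (q ^ (k + 1) * q ^ m)%R with (q * q ^ (k + m))%R.
    + field. lra.
    + rewrite <- pow_add. replace (k + 1 + m)%nat with (S (k + m)) by lia. reflexivity.
Qed.

Lemma qfac_cvg : exists L, (0 < L)%R /\ is_lim_seq (qfac q) L.
Proof.
  destruct (qfac_lower_bound q Hq) as [d [Hd Hdm]].
  destruct (ex_finite_lim_seq_decr (qfac q) d) as [L HL]; auto.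
  { intros n. simpl. pose proof (qfac_pos q Hq n). pose proof (qpow_S_lt_1 q Hq n).
    pose proof (qpow_pos q Hq (S n)). simpl in *. nra. }
  exists L. split; auto.
  assert (d <= L)%R by (apply (is_lim_seq_le (fun _ => d) (qfac q) d L); auto using is_lim_seq_const).
  lra.
Qed.

Lemma qpoch_inf_ratio k :
  qpoch_inf (RtoC (q ^ (k + 1))) q / qpoch_inf (RtoC q) q = / RtoC (qfac q k).
Proof.
  destruct qfac_cvg as [L [HL Hlim]].
  pose proof (qfac_pos q Hq k) as Hk.
  assert (E1 : qpoch_inf (RtoC q) q = RtoC L).
  { apply lim_filtermap_eq, (filterlim_ext (fun n => RtoC (qfac q n))).
    - intros n. rewrite qpoch_q. reflexivity.
    - apply filterlim_RtoC, Hlim. }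
  assert (E2 : qpoch_inf (RtoC (q ^ (k + 1))) q = RtoC (L / qfac q k)).
  { apply lim_filtermap_eq, (filterlim_ext (fun n => RtoC (qfac q (k + n) / qfac q k))).
    - intros n. rewrite qpoch_qpow_S. reflexivity.
    - apply filterlim_RtoC.
      apply (is_lim_seq_ext (fun n => qfac q (n + k) * / qfac q k)%R).
      { intros n. rewrite Nat.add_comm. reflexivity. }
      apply (is_lim_seq_scal_r _ _ L), is_lim_seq_incr_n, Hlim. }
  rewrite E1, E2, RtoC_div by lra. field.
  split; intro Hc; apply RtoC_inj in Hc; lra.
Qed.

Lemma phi01_bessel_entire k x :
  phi01 (RtoC (q ^ (k + 1))) q (- RtoC (q ^ (k + 1)) * x)
  = RtoC (qfac q k) * bessel_entire q k x.
Proof.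
  apply CSeries_correct.
  eapply is_series_ext;
    [|apply (is_series_scal (RtoC (qfac q k)) _ _ (is_series_bessel_entire q Hq k x))].
  intros m. change (scal ?a ?b) with (a * b). unfold bessel_term.
  rewrite (pow_n_Cpow (- RtoC (q ^ (k + 1)) * x) m), Cpow_mult_l, qpoch_q, qpoch_qpow_S.
  pose proof (qfac_pos q Hq m). pose proof (qfac_pos q Hq k).
  pose proof (qfac_pos q Hq (k + m)).
  replace ((- RtoC (q ^ (k + 1))) ^ m) with (RtoC ((-1) ^ m * q ^ ((k + 1) * m))).
  2: { rewrite <- RtoC_opp, <- RtoC_pow, pow_mult, <- Rpow_mult_distr.
       f_equal. f_equal. ring. }
  rewrite <- RtoC_mult, <- RtoC_div.
  2: { apply Rgt_not_eq, Rmult_lt_0_compat; auto. apply Rdiv_lt_0_compat; auto. }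
  rewrite !Cmult_assoc, <- !RtoC_mult. f_equal. f_equal.
  unfold bessel_coef.
  replace (m * (m + k))%nat with (m * (m - 1) + (k + 1) * m)%nat
    by (destruct m; [lia | replace (S m - 1)%nat with m by lia; ring]).

  rewrite pow_add, (Nat.add_comm m k). field. lra.
Qed.

Lemma J2_bessel_entire n w : J2 n q (2 * w) = w ^ n * bessel_entire q n (w ^ 2).
Proof.
  unfold J2.
  replace (- RtoC (q ^ (n + 1)) * pow_n (2 * w) 2 / 4) with (- RtoC (q ^ (n + 1)) * w ^ 2)
    by (rewrite (pow_n_Cpow (2 * w) 2); field).
  rewrite phi01_bessel_entire, qpoch_inf_ratio, (pow_n_Cpow (2 * w / 2) n).
  replace (2 * w / 2) with w by field.
  pose proof (qfac_pos q Hq n). field. intro H1. apply RtoC_inj in H1. lra.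
Qed.

Lemma jfrak_bessel_entire n w :
  jfrak n q (2 * w) = RtoC (Rpower q (INR (n * (n + 1)) / 4)) * w ^ n
     * bessel_entire q n (RtoC (Rpower q (1 / 2)) * w ^ 2).
Proof.
  unfold jfrak.
  replace (Rpower q (INR n + 3 / 2)) with (q ^ (n + 1) * Rpower q (1 / 2))%R.
  2: { rewrite <- Rpower_pow, <- Rpower_plus by lra. f_equal.
       rewrite plus_INR. simpl. field. }
  replace (- RtoC (q ^ (n + 1) * Rpower q (1 / 2)) * pow_n (2 * w) 2 / 4)
    with (- RtoC (q ^ (n + 1)) * (RtoC (Rpower q (1 / 2)) * w ^ 2))
    by (rewrite (pow_n_Cpow (2 * w) 2), RtoC_mult; field).
  rewrite phi01_bessel_entire, qpoch_inf_ratio, (pow_n_Cpow (2 * w / 2) n).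
  replace (2 * w / 2) with w by field.
  pose proof (qfac_pos q Hq n). field. intro H1. apply RtoC_inj in H1. lra.
Qed.

End Normalisation.

Section Weights.
Local Open Scope R_scope.
Variable q : R.
Hypothesis Hq : 0 < q.

Lemma qpow_choose2_Rpower k : qpow_choose2 q k = Rpower q (INR k * (INR k - 1) / 2).
Proof.
  induction k; simpl qpow_choose2.
  - replace (INR 0 * (INR 0 - 1) / 2) with 0 by (simpl; field). rewrite Rpower_O; auto.
  - rewrite IHk, <- (Rpower_pow k q Hq), <- Rpower_plus. f_equal. rewrite S_INR. field.
Qed.

Lemma jfrak_weight_eq k :
  (Rpower q (INR (S k) / 2) + Rpower q (- INR (S k) / 2))
  * (Rpower q (INR (S k * (S k + 1)) / 4) * Rpower q (INR (S k * (S k + 1)) / 4))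
  = bessel_weight q (S k) * Rpower q (1 / 2) ^ S k.
Proof.
  unfold bessel_weight. rewrite !qpow_choose2_Rpower.
  rewrite <- (Rpower_pow (S k) (Rpower q (1 / 2))) by apply exp_pos.
  rewrite Rpower_mult, <- Rpower_plus.
  rewrite Rmult_plus_distr_r, Rmult_plus_distr_r, <- !Rpower_plus.
  set (a := INR (S k)).
  replace (INR (S k * (S k + 1))) with (a * (a + 1))
    by (unfold a; rewrite mult_INR, plus_INR; simpl; ring).
  replace (INR (S (S k))) with (a + 1) by (unfold a; rewrite (S_INR (S k)); ring).
  rewrite Rplus_comm. f_equal; f_equal; field.
Qed.

Lemma J2_weight_eq k :
  (Rpower q (INR (S k) / 2) + Rpower q (- INR (S k) / 2)) * Rpower q (INR (S k * S k) / 2)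
  = bessel_weight q (S k).
Proof.
  unfold bessel_weight. rewrite !qpow_choose2_Rpower.
  rewrite Rmult_plus_distr_r, <- !Rpower_plus.
  set (a := INR (S k)).
  replace (INR (S k * S k)) with (a * a) by (unfold a; rewrite mult_INR; ring).
  replace (INR (S (S k))) with (a + 1) by (unfold a; rewrite (S_INR (S k)); ring).
  rewrite Rplus_comm. f_equal; f_equal; field.
Qed.

End Weights.

Section Assembly.
Variable q : R.
Hypothesis Hq : (0 < q < 1)%R.

Lemma Cpow_sqr_comm (w : C) n : (w ^ 2) ^ n = (w ^ n) ^ 2.
Proof. rewrite <- !Cpow_mult_r, Nat.mul_comm. reflexivity. Qed.

Lemma jfrak_square_term w k :
  RtoC (Rpower q (INR (S k) / 2) + Rpower q (- INR (S k) / 2))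
  * pow_n (jfrak (S k) q (2 * w)) 2
  = bessel_square_term q (RtoC (Rpower q (1 / 2)) * w ^ 2) (S k).
Proof.
  rewrite (pow_n_Cpow _ 2), jfrak_bessel_entire by exact Hq.
  unfold bessel_square_term.
  set (a := bessel_entire q (S k) (RtoC (Rpower q (1 / 2)) * w ^ 2)).
  rewrite (Cpow_mult_l (RtoC (Rpower q (1 / 2))) (w ^ 2)), Cpow_sqr_comm, <- RtoC_pow.
  transitivity (RtoC ((Rpower q (INR (S k) / 2) + Rpower q (- INR (S k) / 2))
       * (Rpower q (INR (S k * (S k + 1)) / 4) * Rpower q (INR (S k * (S k + 1)) / 4)))
       * (w ^ S k) ^ 2 * a ^ 2).
  { rewrite !RtoC_mult. ring. }
  rewrite jfrak_weight_eq by lra. rewrite !RtoC_mult. ring.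
Qed.

Lemma J2_square_term w k :
  RtoC ((Rpower q (INR (S k) / 2) + Rpower q (- INR (S k) / 2))
        * Rpower q (INR (S k * S k) / 2))
  * pow_n (J2 (S k) q (2 * w)) 2
  = bessel_square_term q (w ^ 2) (S k).
Proof.
  rewrite (pow_n_Cpow _ 2), J2_bessel_entire, J2_weight_eq by lra.
  unfold bessel_square_term. rewrite Cpow_sqr_comm. ring.
Qed.

End Assembly.

Theorem mainTheorem10 (q : R) (w : C) :
  (0 < q < 1)%R ->
  is_series
    (fun k : nat =>
       RtoC (Rpower q (INR (S k) / 2) + Rpower q (- INR (S k) / 2))
       * pow_n (jfrak (S k) q (2 * w)) 2)
    (qpoch_inf (- RtoC (Rpower q (1 / 2)) * pow_n w 2) q
     - pow_n (jfrak 0 q (2 * w)) 2)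
  /\
  is_series
    (fun k : nat =>
       RtoC ((Rpower q (INR (S k) / 2) + Rpower q (- INR (S k) / 2))
             * Rpower q (INR (S k * S k) / 2))
       * pow_n (J2 (S k) q (2 * w)) 2)
    (qpoch_inf (- pow_n w 2) q - pow_n (J2 0 q (2 * w)) 2).
Proof.
  intros Hq. rewrite (pow_n_Cpow w 2). split.
  - replace (pow_n (jfrak 0 q (2 * w)) 2)
      with (bessel_entire q 0 (RtoC (Rpower q (1 / 2)) * w ^ 2) ^ 2).
    2: { rewrite (pow_n_Cpow (jfrak 0 q (2 * w)) 2), jfrak_bessel_entire by exact Hq.
         replace (INR (0 * (0 + 1)) / 4)%R with 0%R by (simpl; field).
         rewrite Rpower_O by lra. simpl. ring. }
    replace (- RtoC (Rpower q (1 / 2)) * w ^ 2) with (- (RtoC (Rpower q (1 / 2)) * w ^ 2))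
      by ring.
    eapply is_series_ext; [|apply (is_series_bessel_square_tail q Hq)].
    intros k. symmetry. apply jfrak_square_term, Hq.
  - replace (pow_n (J2 0 q (2 * w)) 2) with (bessel_entire q 0 (w ^ 2) ^ 2)
      by (rewrite (pow_n_Cpow (J2 0 q (2 * w)) 2), J2_bessel_entire by exact Hq; simpl; ring).
    eapply is_series_ext; [|apply (is_series_bessel_square_tail q Hq)].
    intros k. symmetry. apply J2_square_term, Hq.
Qed.
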